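(* Let $f : \{0, 1\}^n \to \{0, 1\}$ be a Boolean function. Then $\lceil\log(\mathsf{NAADT}(f))\rceil \leq \mathsf{D}_{\mathrm{cc}}^\rightarrow(f \circ \mathsf{AND}) \leq \mathsf{NAADT}(f)$.
   Context: $\mathsf{AND}_S(x)=\prod_{i\in S}x_i$ for $S\subseteq[n]$. $\mathsf{NAADT}(f)$ is the minimum $k$ for which there exist $S_1,\dots,S_k\subseteq[n]$ such that $f(x)$ is determined by $\mathsf{AND}_{S_1}(x),\dots,\mathsf{AND}_{S_k}(x)$ for all $x$. $f\circ\mathsf{AND}$ is the two-party function $(x,y)\mapsto f(x_1\wedge y_1,\dots,x_n\wedge y_n)$ (Alice holds $x$, Bob $y$); $\mathsf{D}_{\mathrm{cc}}^\rightarrow$ is deterministic one-way communication complexity. Logarithms are base 2. *)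

From mathcomp Require Import all_boot all_order.
Set Implicit Arguments. Unset Strict Implicit. Unset Printing Implicit Defensive.

Notation bvec n := {ffun 'I_n -> bool}.

Definition AND_S n (S : {set 'I_n}) (x : bvec n) : bool := [forall i in S, x i].

Definition naadt_ok n (f : bvec n -> bool) (k : nat) : bool :=
  [exists Ss : {ffun 'I_k -> {set 'I_n}}, exists g : {ffun bvec k -> bool},
    forall x : bvec n, f x == g [ffun j => AND_S (Ss j) x]].

Lemma naadt_ok_n n (f : bvec n -> bool) : naadt_ok f n.
Proof.
apply/existsP; exists [ffun j => [set j]]; apply/existsP; exists [ffun v => f v].
apply/forallP => x; rewrite ffunE; apply/eqP; congr f; apply/ffunP => j.
rewrite !ffunE.
rewrite /AND_S; apply/esym; case: (boolP (x j)) => xj.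
- by apply/forall_inP => i; rewrite inE => /eqP ->.
- by apply/negbTE/forall_inPn; exists j; rewrite ?inE ?eqxx.
Qed.

Lemma naadt_ex n (f : bvec n -> bool) : exists k, naadt_ok f k.
Proof. by exists n; apply: naadt_ok_n. Qed.

Definition NAADT n (f : bvec n -> bool) : nat := ex_minn (naadt_ex f).

Definition compAND n (f : bvec n -> bool) (x y : bvec n) : bool :=
  f [ffun i => x i && y i].

(* deterministic one-way protocol of cost c: Alice sends a c-bit message
   m(x), Bob outputs b(m(x), y). *)
Definition oneway_ok n (F : bvec n -> bvec n -> bool) (c : nat) : bool :=
  [exists m : {ffun bvec n -> bvec c}, exists b : {ffun bvec c -> {ffun bvec n -> bool}},
    forall x, forall y, F x y == b (m x) y].

Lemma oneway_ex n (F : bvec n -> bvec n -> bool) : exists c, oneway_ok F c.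
Proof.
exists n; apply/existsP; exists [ffun x => x]; apply/existsP.
exists [ffun x => [ffun y => F x y]].
by apply/forallP => x; apply/forallP => y; rewrite !ffunE.
Qed.

Definition Dcc_oneway n (F : bvec n -> bvec n -> bool) : nat :=
  ex_minn (oneway_ex F).

(* ceil(log2 k), with the convention ceil(log2 0) = 0 *)
Definition ceil_log2 (k : nat) : nat := up_log 2 k.

From mathcomp Require Import all_boot all_order.
Set Implicit Arguments. Unset Strict Implicit. Unset Printing Implicit Defensive.

(* Upper bound: Alice sends the k bits AND_{S_j}(x), from which Bob computes
   AND_{S_j}(x /\ y) = AND_{S_j}(x) && AND_{S_j}(y).
   Lower bound: call x and x' indistinguishable if f(x /\ y) = f(x' /\ y) for
   every y.  Inputs with the same message are indistinguishable, and each
   class is closed under /\, hence has a least element, its core.  The value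
   f(x) is determined by which cores lie below x, and there are at most 2^c
   cores, so f is determined by at most 2^c ANDs. *)

Section Cores.

Variables (T : finType) (R : eqType) (g : {set T} -> R).

Definition indist (A B : {set T}) : bool :=
  [forall C, g (A :&: C) == g (B :&: C)].

Lemma indistP A B : reflect (forall C, g (A :&: C) = g (B :&: C)) (indist A B).
Proof. by apply: (iffP forallP) => E C; apply/eqP. Qed.

Lemma indist_refl A : indist A A.
Proof. exact/indistP. Qed.

Lemma indist_sym A B : indist A B -> indist B A.
Proof. by move/indistP=> E; apply/indistP => C; rewrite E. Qed.

Lemma indist_trans A B C : indist A B -> indist B C -> indist A C.
Proof. by move=> /indistP EAB /indistP EBC; apply/indistP => D; rewrite EAB. Qed.

Lemma indistI A B C : indist A C -> indist B C -> indist (A :&: B) C.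
Proof.
move=> /indistP EAC /indistP EBC; apply/indistP => D.
by rewrite -setIA EAC setICA EBC setIA setIid.
Qed.

Definition core (A : {set T}) : {set T} := \bigcap_(B | indist B A) B.

Lemma core_sub A B : indist B A -> core A \subset B.
Proof. exact: (bigcap_inf B). Qed.

Lemma core_indist A : indist (core A) A.
Proof.
have -> : core A = A :&: core A by apply/esym/setIidPr/core_sub/indist_refl.
(* Intersecting with A keeps the empty intersection setT inside the class. *)
rewrite /core; apply: (big_ind (fun X => indist (A :&: X) A)).
- by rewrite setIT indist_refl.
- by move=> X Y AX AY; rewrite -{1}[A]setIid setIACA indistI.
- by move=> B AB; rewrite indistI ?indist_refl.
Qed.

Lemma core_eq A B : indist A B -> core A = core B.
Proof.
move=> AB; apply: eq_bigl => C; apply/idP/idP => CA.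
- exact: indist_trans CA AB.
- exact: indist_trans CA (indist_sym AB).
Qed.

(* g X = g (core X :&: X) = g (core X) = g (core X :&: Y) = g (X :&: Y). *)
Lemma core_sub_eq (X Y : {set T}) : core X \subset Y -> core Y \subset X -> g X = g Y.
Proof.
have core_meet (Z W : {set T}) : core Z \subset W -> g Z = g (Z :&: W).
  move=> ZW; rewrite -{1}[Z]setIid -(indistP _ _ (core_indist Z)).
  rewrite (setIidPl (core_sub (indist_refl Z))).
  by rewrite -{1}(setIidPl ZW) (indistP _ _ (core_indist Z)).
by move=> XY YX; rewrite (core_meet X Y) // (core_meet Y X) // setIC.
Qed.

End Cores.

Section BooleanCube.

Variable n : nat.
Implicit Types (x y : bvec n) (A S : {set 'I_n}).

Definition supp x : {set 'I_n} := [set i | x i].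

Definition indicator A : bvec n := [ffun i => i \in A].

Lemma suppK : cancel supp indicator.
Proof. by move=> x; apply/ffunP => i; rewrite ffunE inE. Qed.

Lemma indicatorK : cancel indicator supp.
Proof. by move=> A; apply/setP => i; rewrite inE ffunE. Qed.

Lemma AND_S_supp S x : AND_S S x = (S \subset supp x).
Proof. by apply/forall_inP/subsetP => Sx i /Sx; rewrite ?inE. Qed.

Lemma AND_S_meet S x y :
  AND_S S [ffun i => x i && y i] = AND_S S x && AND_S S y.
Proof.
rewrite !AND_S_supp -subsetI.
suff -> : supp [ffun i => x i && y i] = supp x :&: supp y by [].
by apply/setP => i; rewrite !inE ffunE.
Qed.

Lemma compAND_supp (f : bvec n -> bool) x y :
  compAND f x y = f (indicator (supp x :&: supp y)).
Proof. by rewrite /compAND; congr f; apply/ffunP => i; rewrite !ffunE !inE. Qed.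

End BooleanCube.

Definition ANDs n k (Ss : {ffun 'I_k -> {set 'I_n}}) (x : bvec n) : bvec k :=
  [ffun j => AND_S (Ss j) x].

Lemma ANDsE n k (Ss : {ffun 'I_k -> {set 'I_n}}) x j : ANDs Ss x j = AND_S (Ss j) x.
Proof. exact: ffunE. Qed.

Lemma naadt_ok_determined n (f : bvec n -> bool) k (Ss : {ffun 'I_k -> {set 'I_n}}) :
  (forall x x', ANDs Ss x = ANDs Ss x' -> f x = f x') -> naadt_ok f k.
Proof.
move=> determined; apply/existsP; exists Ss; apply/existsP.
exists [ffun v => if [pick z | ANDs Ss z == v] is Some z then f z else false].
apply/forallP => x; rewrite ffunE; case: pickP => [z /eqP Ez | /(_ x)].
- by rewrite (determined x z) ?Ez.
- by rewrite eqxx.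
Qed.

Lemma naadt_oneway n (f : bvec n -> bool) k :
  naadt_ok f k -> oneway_ok (compAND f) k.
Proof.
case/existsP => Ss /existsP [h /forallP fE].
apply/existsP; exists [ffun x => ANDs Ss x]; apply/existsP.
exists [ffun v : bvec k => [ffun y => h [ffun j => v j && AND_S (Ss j) y]]].
apply/forallP => x; apply/forallP => y; rewrite !ffunE /compAND (eqP (fE _)).
by apply/eqP/(congr1 h)/ffunP => j; rewrite !ffunE AND_S_meet.
Qed.

Lemma oneway_naadt n (f : bvec n -> bool) c :
  oneway_ok (compAND f) c -> naadt_ok f #|bvec c|.
Proof.
case/existsP => m /existsP [b /forallP protocol].
pose g A := f (indicator A).
have same_message x x' : m x = m x' -> indist g (supp x) (supp x').
  move=> Em; apply/indistP => C; rewrite /g -(indicatorK C) -!compAND_supp.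
  by rewrite !(eqP (forallP (protocol _) _)) Em.
pose rep mu := odflt [ffun=> false] [pick x | m x == mu].
have rep_message x : m (rep (m x)) = m x.
  by rewrite /rep; case: pickP => [z /eqP // | /(_ x)]; rewrite eqxx.
pose Ss := [ffun j : 'I_#|bvec c| => core g (supp (rep (enum_val j)))].
have core_listed x : Ss (enum_rank (m x)) = core g (supp x).
  by rewrite ffunE enum_rankK; apply/core_eq/same_message.
have core_below x x' : ANDs Ss x = ANDs Ss x' -> core g (supp x) \subset supp x'.
  move=> /ffunP/(_ (enum_rank (m x))); rewrite !ANDsE.
  by rewrite !AND_S_supp core_listed core_sub ?indist_refl.
apply: (naadt_ok_determined (Ss := Ss)) => x x' E.
by rewrite -(suppK x) -(suppK x'); apply: (core_sub_eq (g := g)); apply: core_below.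
Qed.

Lemma NAADT_min n (f : bvec n -> bool) k : naadt_ok f k -> NAADT f <= k.
Proof. by rewrite /NAADT; case: ex_minnP => k0 _; apply. Qed.

Lemma NAADT_ok n (f : bvec n -> bool) : naadt_ok f (NAADT f).
Proof. by rewrite /NAADT; case: ex_minnP. Qed.

Lemma Dcc_oneway_min n (F : bvec n -> bvec n -> bool) c :
  oneway_ok F c -> Dcc_oneway F <= c.
Proof. by rewrite /Dcc_oneway; case: ex_minnP => c0 _; apply. Qed.

Lemma Dcc_oneway_ok n (F : bvec n -> bvec n -> bool) : oneway_ok F (Dcc_oneway F).
Proof. by rewrite /Dcc_oneway; case: ex_minnP. Qed.

Theorem claim4p3 (n : nat) (f : {ffun 'I_n -> bool} -> bool) :
  ceil_log2 (NAADT f) <= Dcc_oneway (compAND f) <= NAADT f.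
Proof.
rewrite (Dcc_oneway_min (naadt_oneway (NAADT_ok f))) andbT.
apply: up_log_min => //.
rewrite -[2]card_bool -[X in _ ^ X]card_ord -card_ffun.
exact/NAADT_min/oneway_naadt/Dcc_oneway_ok.
Qed.
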